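(* Let $G$ be a simple connected bipartite graph on $n$ vertices with maximum degree $\Delta$, and let $S=\sum_{j=1}^{n}D_j$. Suppose that $\deg(v_1)=\deg(v_2)=\cdots=\deg(v_k)=\Delta\le n-2$ for some $k$ with $1\le k\le n$. Then $$S_{\mathcal{D}}(G)\ \ge\ \max_{1\le i\le k}\frac{\sqrt{a_i^{2}+4b_i(1+\Delta)(n-\Delta-1)}}{(1+\Delta)(n-\Delta-1)},$$ where $a_i=(\Delta+1)(S-2D_i-2t_{v_i}\Delta)+2n\Delta^{2}$ and $b_i=D_i^{2}-2S\Delta^{2}+2D_it_{v_i}\Delta+t_{v_i}^{2}\Delta^{2}$.
   Context: $G$ has vertex set $\{v_1,\dots,v_n\}$; $d_G(u,v)$ denotes the distance in $G$. The distance matrix is $\mathcal{D}(G)=(d_G(v_i,v_j))_{n\times n}$. The transmission (distance degree) of $v_i$ is $D_i=\sum_{j\ne i}d_G(v_i,v_j)$, the $i$-th row sum of $\mathcal{D}(G)$. For a vertex $v$ of degree $d_v$, $t_v=\frac{1}{d_v}\sum_{v_j\sim v}D_j$ is the average distance degree of the neighbours of $v$. Let $\rho^{\mathcal{D}}(G)$ and $\rho^{\mathcal{D}}_{min}(G)$ be the largest and least eigenvalues of $\mathcal{D}(G)$; the distance spread is $S_{\mathcal{D}}(G)=\rho^{\mathcal{D}}(G)-\rho^{\mathcal{D}}_{min}(G)$. *)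

From HB Require Import structures.
From mathcomp Require Import all_boot all_order all_algebra.
Set Implicit Arguments. Unset Strict Implicit. Unset Printing Implicit Defensive.
Import Order.TTheory GRing.Theory Num.Theory.

(* Simple graphs on the vertex set 'I_n (vertex v_{i+1} is the ordinal i),
   given by an adjacency relation e. *)

Definition simple_graph n (e : rel 'I_n) : Prop :=
  (forall x y, e x y = e y x) /\ (forall x, ~~ e x x).

Definition connected_graph n (e : rel 'I_n) : Prop :=
  forall x y, connect e x y.

Definition bipartite_graph n (e : rel 'I_n) : Prop :=
  exists f : 'I_n -> bool, forall x y, e x y -> f x != f y.

Definition deg n (e : rel 'I_n) (x : 'I_n) : nat := #|[set y | e x y]|.

Definition max_deg n (e : rel 'I_n) : nat := \max_(x : 'I_n) deg e x.

Fixpoint ball n (e : rel 'I_n) (k : nat) (u : 'I_n) : {set 'I_n} :=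
  match k with
  | 0 => [set u]
  | k'.+1 => ball e k' u :|: [set y | [exists x in ball e k' u, e x y]]
  end.

(* graph distance d_G(u,v): the least k with v within k steps of u
   (for a connected graph on n vertices this k is < n) *)
Definition dist n (e : rel 'I_n) (u v : 'I_n) : nat :=
  find (fun k => v \in ball e k u) (iota 0 n).

Local Open Scope ring_scope.

Definition dist_mx (R : ringType) n (e : rel 'I_n) : 'M[R]_n :=
  \matrix_(i, j) (dist e i j)%:R.

Definition transmission (R : ringType) n (e : rel 'I_n) (i : 'I_n) : R :=
  \sum_(j < n | j != i) (dist e i j)%:R.

Definition avg_nbr_trans (R : fieldType) n (e : rel 'I_n) (v : 'I_n) : R :=
  (deg e v)%:R^-1 * \sum_(j < n | e v j) transmission R e j.

Definition is_largest_eigenvalue (R : realFieldType) n (A : 'M[R]_n) (l : R) :=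
  eigenvalue A l /\ (forall m, eigenvalue A m -> m <= l).

Definition is_least_eigenvalue (R : realFieldType) n (A : 'M[R]_n) (l : R) :=
  eigenvalue A l /\ (forall m, eigenvalue A m -> l <= m).

(* Fix a vertex v of maximum degree Delta and let N be its closed neighbourhood.
   Two neighbours of v are not adjacent in a bipartite graph, so they are at
   distance 2; hence the sums of the distance matrix over N x N, N x V and V x V
   are 2 Delta^2, D_v + Delta t_v and S.  Testing the Rayleigh quotient of the
   distance matrix on vectors constant on N and on its complement shows that both
   roots of the 2 x 2 pencil formed by these block sums against
   diag(|N|, n - |N|) lie in [rho_min, rho]; their distance is the bound. *)

From HB Require Import structures.
From mathcomp Require Import all_boot all_order all_algebra.
From mathcomp Require Import complex ring lra zify.
Set Implicit Arguments. Unset Strict Implicit. Unset Printing Implicit Defensive.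
Import Order.TTheory GRing.Theory Num.Theory.
Local Open Scope ring_scope.

Section RealSymmetricSpectrum.
Variables (R : rcfType) (n : nat) (A : 'M[R]_n).
Hypothesis symA : A^T = A.

Local Notation toC := (real_complex R).
Local Notation AC := (map_mx toC A).
Local Notation P := (spectralmx AC).
Local Notation sp := (spectral_diag AC).

Let toC_real (r : R) : toC r \is Num.real.
Proof. by apply/complex_realP; exists r. Qed.

Let AC_herm : AC \is hermsymmx.
Proof.
apply: realsym_hermsym; last by apply/mxOverP => i j; rewrite mxE.
by apply/is_hermitianmxP; rewrite expr0 scale1r map_mx_id // map_trmx symA.
Qed.

Let AC_spectral : AC = invmx P *m diag_mx sp *m P.
Proof. exact/orthomx_spectralP/hermitian_normalmx. Qed.

Let sp_Re j : toC (complex.Re (sp 0 j)) = sp 0 j.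
Proof.
have /mxOverP spR := hermitian_spectral_diag_real AC_herm.
exact: RRe_real.
Qed.

Lemma eigenvalue_Re_spectral_diag j : eigenvalue A (complex.Re (sp 0 j)).
Proof.
rewrite -(eigenvalue_map toC); have /= -> := sp_Re j.
apply/eigenvalueP; exists (row j P).
  rewrite [X in _ *m X = _]AC_spectral !mulmxA -row_mul mulmxV ?spectral_unit //.
  by rewrite -row_mul mul1mx row_diag_mx -scalemxAl -rowE.
apply/negP => /eqP /(congr1 (mulmx^~ (invmx P))).
rewrite -row_mul mulmxV ?spectral_unit // mul0mx row1 => /matrixP /(_ 0 j).
by rewrite !mxE !eqxx /= => /eqP; rewrite oner_eq0.
Qed.

(* With [w := x P^-1] over [R[i]], the weights are [|w_j|^2]. *)
Lemma quadmx_spectral_sum (x : 'rV[R]_n) :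
  exists2 w : 'I_n -> R, (forall j, 0 <= w j) &
    (x *m A *m x^T) 0 0 = \sum_j complex.Re (sp 0 j) * w j
    /\ (x *m x^T) 0 0 = \sum_j w j.
Proof.
pose xC := map_mx toC x; pose w := xC *m invmx P.
have xCT : xC^T = (xC ^t* )%sesqui.
  by apply/matrixP => i j; rewrite !mxE conj_Creal.
have wT : (w ^t* )%sesqui = P *m (xC ^t* )%sesqui.
  by rewrite /w trmx_mul map_mxM invmx_unitary ?spectral_unitarymx // trmxCK.
have toC_mx (M : 'M[R]_1) : toC (M 0 0) = map_mx toC M 0 0 by rewrite mxE.
have quadC : toC ((x *m A *m x^T) 0 0) = (w *m diag_mx sp *m (w ^t* )%sesqui) 0 0.
  by rewrite toC_mx !map_mxM -map_trmx xCT {1}AC_spectral wT /w !mulmxA.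
have normC : toC ((x *m x^T) 0 0) = (w *m (w ^t* )%sesqui) 0 0.
  rewrite toC_mx !map_mxM -map_trmx xCT wT /w.
  by rewrite !mulmxA -(mulmxA xC) mulVmx ?spectral_unit // mulmx1.
clearbody w.
pose wt k := complex.Re (w 0 k * (w 0 k)^*).
have wtE k : toC (wt k) = w 0 k * (w 0 k)^*.
  by rewrite RRe_real // ger0_real // mul_conjC_ge0.
exists wt => [k|]; first by have := mul_conjC_ge0 (w 0 k); rewrite -wtE ler0c.
split; apply: (@complexI R); rewrite ?quadC ?normC !mxE rmorph_sum.
  apply: eq_bigr => k _; rewrite rmorphM /= sp_Re wtE mul_mx_diag !mxE.
  by rewrite mulrCA mulrA.
by apply: eq_bigr => k _; rewrite !mxE; exact/esym/wtE.
Qed.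

Lemma quadmx_le_max_eigenvalue (rho : R) (x : 'rV[R]_n) :
  (forall l, eigenvalue A l -> l <= rho) ->
  (x *m A *m x^T) 0 0 <= rho * (x *m x^T) 0 0.
Proof.
move=> le_rho; have [w w_ge0 [-> ->]] := quadmx_spectral_sum x.
rewrite mulr_sumr; apply: ler_sum => j _.
by rewrite ler_wpM2r ?le_rho ?eigenvalue_Re_spectral_diag.
Qed.

Lemma quadmx_ge_min_eigenvalue (m : R) (x : 'rV[R]_n) :
  (forall l, eigenvalue A l -> m <= l) ->
  m * (x *m x^T) 0 0 <= (x *m A *m x^T) 0 0.
Proof.
move=> ge_m; have [w w_ge0 [-> ->]] := quadmx_spectral_sum x.
rewrite mulr_sumr; apply: ler_sum => j _.
by rewrite ler_wpM2r ?ge_m ?eigenvalue_Re_spectral_diag.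
Qed.

End RealSymmetricSpectrum.

Lemma quad2_psd (R : realFieldType) (a1 a2 q : R) :
  (forall s t : R, 0 <= s ^+ 2 * a1 + t ^+ 2 * a2 - 2 * s * t * q) ->
  [/\ 0 <= a1, 0 <= a2 & q ^+ 2 <= a1 * a2].
Proof.
move=> psd.
have a1_ge0 : 0 <= a1 by have := psd 1 0; rewrite expr1n expr0n /=; lra.
have a2_ge0 : 0 <= a2 by have := psd 0 1; rewrite expr1n expr0n /=; lra.
split => //; have [a2_0|a2_gt0] := eqVneq a2 0.
  by have := psd q (a1 + 1); rewrite a2_0; have := sqr_ge0 q; nra.
have := psd a2 q.
have -> : a2 ^+ 2 * a1 + q ^+ 2 * a2 - 2 * a2 * q * q = a2 * (a1 * a2 - q ^+ 2) by ring.
by rewrite pmulr_rge0 ?subr_ge0 // lt_def a2_gt0.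
Qed.

Lemma sqrt_disc_le (R : rcfType) (c1 c2 a1 a2 q : R) :
  0 <= c1 -> 0 <= c2 -> 0 <= a1 -> 0 <= a2 -> q ^+ 2 <= a1 * a2 ->
  Num.sqrt ((c2 * a1 - c1 * a2) ^+ 2 + 4 * c1 * c2 * q ^+ 2) <= c2 * a1 + c1 * a2.
Proof.
move=> c1_ge0 c2_ge0 a1_ge0 a2_ge0 q_le.
rewrite -[leRHS]ger0_norm ?addr_ge0 ?mulr_ge0 // -sqrtr_sqr ler_wsqrtr //.
rewrite -subr_ge0.
have -> : (c2 * a1 + c1 * a2) ^+ 2 - ((c2 * a1 - c1 * a2) ^+ 2 + 4 * c1 * c2 * q ^+ 2)
  = 4 * c1 * c2 * (a1 * a2 - q ^+ 2) by ring.
by rewrite !mulr_ge0 // subr_ge0.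
Qed.

(* The bound is the distance between the two roots of
   [det ([[p, q], [q, r]] - x diag(c1, c2)) = 0]; the hypotheses put both roots in [[m, rho]]. *)
Lemma pencil2_spread (R : rcfType) (c1 c2 p q r rho m : R) :
  0 < c1 -> 0 < c2 ->
  (forall s t, s ^+ 2 * p + 2 * s * t * q + t ^+ 2 * r <= rho * (s ^+ 2 * c1 + t ^+ 2 * c2)) ->
  (forall s t, m * (s ^+ 2 * c1 + t ^+ 2 * c2) <= s ^+ 2 * p + 2 * s * t * q + t ^+ 2 * r) ->
  Num.sqrt ((p * c2 - r * c1) ^+ 2 + 4 * c1 * c2 * q ^+ 2) / (c1 * c2) <= rho - m.
Proof.
move=> c1_gt0 c2_gt0 le_rho ge_m.
have [a1_ge0 a2_ge0 qa] : [/\ 0 <= rho * c1 - p, 0 <= rho * c2 - r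
    & q ^+ 2 <= (rho * c1 - p) * (rho * c2 - r)].
  by apply: quad2_psd => s t; have := le_rho s t; lra.
have [b1_ge0 b2_ge0 qb] : [/\ 0 <= p - m * c1, 0 <= r - m * c2
    & (- q) ^+ 2 <= (p - m * c1) * (r - m * c2)].
  by apply: quad2_psd => s t; have := ge_m s t; lra.
rewrite sqrrN in qb.
have c1_ge0 := ltW c1_gt0; have c2_ge0 := ltW c2_gt0.
have := sqrt_disc_le c1_ge0 c2_ge0 a1_ge0 a2_ge0 qa.
have := sqrt_disc_le c1_ge0 c2_ge0 b1_ge0 b2_ge0 qb.
have -> : (c2 * (rho * c1 - p) - c1 * (rho * c2 - r)) ^+ 2 = (p * c2 - r * c1) ^+ 2 by ring.
have -> : (c2 * (p - m * c1) - c1 * (r - m * c2)) ^+ 2 = (p * c2 - r * c1) ^+ 2 by ring.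
rewrite ler_pdivrMr ?mulr_gt0 //; lra.
Qed.

Definition two_valued_row (R : nzRingType) n (N : {set 'I_n}) (s t : R) : 'rV[R]_n :=
  \row_i (if i \in N then s else t).

Section TwoValuedRow.
Variables (R : comNzRingType) (n : nat) (N : {set 'I_n}) (s t : R).
Local Notation z := (two_valued_row N s t).

Let c i : R := (i \in N)%:R.

Let zE i : z 0 i = t + (s - t) * c i.
Proof. by rewrite /two_valued_row mxE /c; case: (i \in N); rewrite ?mulr1 ?mulr0; ring. Qed.

Let sum_c (F : 'I_n -> R) : \sum_i c i * F i = \sum_(i in N) F i.
Proof.
rewrite [RHS]big_mkcond; apply: eq_bigr => i _.
by rewrite /c; case: (i \in N); rewrite ?mul1r ?mul0r.
Qed.

Lemma two_valued_row_quad (D : 'M[R]_n) : D^T = D ->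
  let SS := \sum_i \sum_j D i j in
  let RN := \sum_(i in N) \sum_j D i j in
  let PP := \sum_(i in N) \sum_(j in N) D i j in
  (z *m D *m z^T) 0 0
  = s ^+ 2 * PP + 2 * s * t * (RN - PP) + t ^+ 2 * (SS - 2 * RN + PP).
Proof.
move=> symD SS RN PP; set u := s - t.
have symDij i j : D j i = D i j by rewrite -[in LHS]symD mxE.
have -> : (z *m D *m z^T) 0 0 = \sum_i \sum_j (t ^+ 2 * D i j
    + t * u * (c i * D i j) + t * u * (c j * D j i) + u ^+ 2 * (c i * (c j * D i j))).
  rewrite mxE; under eq_bigr => j _ do rewrite [(z *m D) 0 j]mxE big_distrl.
  rewrite exchange_big; apply: eq_bigr => i _; apply: eq_bigr => j _.
  by rewrite /= (symDij i j) [z^T _ _]mxE !zE /u; ring.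
have sum1 : \sum_i \sum_j t ^+ 2 * D i j = t ^+ 2 * SS.
  by rewrite mulr_sumr; apply: eq_bigr => i _; rewrite mulr_sumr.
have sum2 : \sum_i \sum_j t * u * (c i * D i j) = t * u * RN.
  by rewrite /RN -sum_c mulr_sumr; apply: eq_bigr => i _; rewrite !mulr_sumr.
have sum3 : \sum_i \sum_j t * u * (c j * D j i) = t * u * RN.
  rewrite exchange_big /RN -sum_c mulr_sumr; apply: eq_bigr => j _.
  by rewrite !mulr_sumr.
have sum4 : \sum_i \sum_j u ^+ 2 * (c i * (c j * D i j)) = u ^+ 2 * PP.
  by rewrite /PP -sum_c mulr_sumr; apply: eq_bigr => i _; rewrite -sum_c !mulr_sumr.
under eq_bigr do rewrite !big_split /=.
by rewrite !big_split /= sum1 sum2 sum3 sum4 /u; ring.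
Qed.

Lemma two_valued_row_norm :
  (z *m z^T) 0 0 = s ^+ 2 * #|N|%:R + t ^+ 2 * (n - #|N|)%:R.
Proof.
have card_N : (#|N| <= n)%N by rewrite -[leqRHS]card_ord max_card.
have sum_c1 : \sum_i c i = #|N|%:R.
  by rewrite -sumr_const -sum_c; apply: eq_bigr => i _; rewrite mulr1.
rewrite mxE (eq_bigr (fun j => t ^+ 2 + (s ^+ 2 - t ^+ 2) * c j)); last first.
  by move=> j _; rewrite [z^T _ _]mxE zE /c; case: (j \in N); rewrite ?mulr1 ?mulr0; ring.
by rewrite big_split /= sumr_const card_ord -mulr_sumr sum_c1 natrB // -mulr_natr; ring.
Qed.

End TwoValuedRow.

Lemma find_iota_eq (p : pred nat) m k :
  (k < m)%N -> p k -> (forall j, (j < k)%N -> ~~ p j) -> find p (iota 0 m) = k.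
Proof.
move=> lt_km pk p_lt_k.
have has_p : has p (iota 0 m) by apply/hasP; exists k; rewrite ?mem_iota.
have lt_find : (find p (iota 0 m) < m)%N by rewrite -[ltnRHS](size_iota 0 m) -has_find.
have := nth_find 0 has_p; rewrite nth_iota // add0n => p_find.
case: (ltngtP (find p (iota 0 m)) k) => // [/p_lt_k|lt_kf]; first by rewrite p_find.
by have := before_find 0 lt_kf; rewrite nth_iota // add0n pk.
Qed.

Section GraphDistance.
Variables (n : nat) (e : rel 'I_n).
Hypothesis e_sym : symmetric e.
Hypothesis e_irr : forall x, ~~ e x x.

Lemma ballP k u v :
  reflect (exists p, [/\ path e u p, last u p = v & (size p <= k)%N]) (v \in ball e k u).
Proof.
elim: k v => [|k IH] v /=.
  rewrite in_set1; apply: (iffP eqP) => [->|[[|y p] [_ <- //]]].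
  by exists [::].
rewrite in_setU in_set; apply: (iffP orP).
  case=> [/IH [p [pp lp sp]]|/existsP [x /andP [/IH [p [pp lp sp]] exv]]].
    by exists p; split => //; apply: leqW.
  by exists (rcons p v); rewrite rcons_path last_rcons size_rcons pp lp exv.
move=> [p [pp lp sp]].
have [le_pk|lt_kp] := leqP (size p) k; first by left; apply/IH; exists p.
have size_p : size p = k.+1 by apply/eqP; rewrite eqn_leq sp lt_kp.
case/lastP: p pp lp size_p {sp lt_kp} => [//|p y].
rewrite rcons_path last_rcons size_rcons => /andP [pp ey] <- [size_p].
by right; apply/existsP; exists (last u p); rewrite ey andbT; apply/IH; exists p; rewrite size_p.
Qed.

Lemma ball_sym k u v : (v \in ball e k u) = (u \in ball e k v).
Proof.
suff ball_symW x y : y \in ball e k x -> x \in ball e k y.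
  by apply/idP/idP; apply: ball_symW.
move=> /ballP [p [pp lp sp]]; apply/ballP; exists (rev (belast x p)); split.
- by rewrite -lp rev_path; apply: sub_path pp => a b /=; rewrite e_sym.
- by case: (p) pp sp lp => [|a q] _ _ //= <-; rewrite rev_cons last_rcons.
- by rewrite size_rev size_belast.
Qed.

Lemma dist_sym u v : dist e u v = dist e v u.
Proof. by apply: eq_find => k; rewrite ball_sym. Qed.

Lemma dist_refl u : dist e u u = 0%N.
Proof. by apply: find_iota_eq; rewrite ?inE //; apply: leq_ltn_trans (ltn_ord u). Qed.

Lemma dist_adj u v : e u v -> dist e u v = 1%N.
Proof.
move=> uv; have uv_neq : u != v by apply: contraTneq uv => ->; apply: e_irr.
apply: find_iota_eq => [|/=|[|//] _].
- by have := ltn_ord u; have := ltn_ord v; move: uv_neq; rewrite -val_eqE /=; lia.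
- by rewrite !inE; apply/orP; right; apply/existsP; exists u; rewrite inE eqxx.
- by rewrite inE eq_sym.
Qed.

Lemma dist_common_nbr u w v : e v u -> e v w -> u != w -> ~~ e u w -> dist e u w = 2%N.
Proof.
move=> vu vw uw nuw.
have vu_neq : v != u by apply: contraTneq vu => ->; apply: e_irr.
have vw_neq : v != w by apply: contraTneq vw => ->; apply: e_irr.
apply: find_iota_eq => [|/=|[|[|//]] _ /=].
- have := ltn_ord u; have := ltn_ord v; have := ltn_ord w.
  by move: uw vu_neq vw_neq; rewrite -!val_eqE /=; lia.
- rewrite !inE; apply/orP; right; apply/existsP; exists v.
  by rewrite vw andbT !inE; apply/orP; right; apply/existsP; exists u; rewrite inE eqxx e_sym.
- by rewrite inE eq_sym.
- rewrite !inE eq_sym negb_or uw /=; apply/existsP => -[x].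
  by rewrite inE => /andP [/eqP ->]; apply/negP.
Qed.

Lemma dist_mx_sym (R : nzRingType) : (dist_mx R e)^T = dist_mx R e.
Proof. by apply/matrixP => i j; rewrite !mxE dist_sym. Qed.

Lemma dist_mx_row_sum (R : nzRingType) i : \sum_j dist_mx R e i j = transmission R e i.
Proof.
rewrite /transmission (bigD1 i) //= mxE dist_refl add0r.
by apply: eq_bigr => j _; rewrite mxE.
Qed.

Lemma deg_mul_avg_nbr_trans (R : numFieldType) v :
  (deg e v)%:R * avg_nbr_trans R e v = \sum_(j < n | e v j) transmission R e j.
Proof.
rewrite /avg_nbr_trans; have [deg0|deg_gt0] := eqVneq (deg e v) 0%N.
  rewrite deg0 mul0r big_pred0 // => j; apply/negbTE.
  by move: deg0 => /eqP; rewrite cards_eq0 => /eqP /setP /(_ j); rewrite !inE => ->.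
by rewrite mulVKf // pnatr_eq0.
Qed.

Hypothesis e_bip : bipartite_graph e.

Lemma nbrs_nonadj v i j : e v i -> e v j -> ~~ e i j.
Proof.
have [f f_bip] := e_bip; move=> /f_bip vi /f_bip vj; apply/negP => /f_bip.
by move: vi vj; case: (f v); case: (f i); case: (f j).
Qed.

Lemma closed_nbhd_dist_sum v :
  let N := v |: [set y | e v y] in
  (\sum_(i in N) \sum_(j in N) dist e i j = 2 * deg e v ^ 2)%N.
Proof.
move=> N; set nb := [set y | e v y].
have v_nb : v \notin nb by rewrite inE e_irr.
have row_v : (\sum_(j in N) dist e v j = deg e v)%N.
  rewrite big_setU1 //= dist_refl add0n (eq_bigr (fun=> 1%N)) ?sum1_card //.
  by move=> j; rewrite inE => /dist_adj.
have row_nb i : i \in nb -> (\sum_(j in N) dist e i j = 1 + 2 * (deg e v).-1)%N.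
  move=> nb_i; have vi : e v i by rewrite inE in nb_i.
  rewrite big_setU1 //= dist_sym dist_adj // (big_setD1 i) //= dist_refl add0n.
  rewrite (eq_bigr (fun=> 2%N)) => [|j]; last first.
    rewrite !inE => /andP [ji vj].
    by apply: (dist_common_nbr vi vj); rewrite 1?eq_sym // (nbrs_nonadj vi vj).
  by rewrite sum_nat_const [deg e v](cardsD1 i) nb_i mulnC.
rewrite big_setU1 //= row_v (eq_bigr (fun=> 1 + 2 * (deg e v).-1)%N) => [|i /row_nb //].
rewrite sum_nat_const -/(deg e v); case: (deg e v) => [//|d] /=; lia.
Qed.

Lemma dist_mx_closed_nbhd_sum (R : nzRingType) v :
  let N := v |: [set y | e v y] in
  \sum_(i in N) \sum_(j in N) dist_mx R e i j = 2 * (deg e v)%:R ^+ 2.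
Proof.
rewrite /= -natrX -natrM -closed_nbhd_dist_sum natr_sum.
by apply: eq_bigr => i _; rewrite natr_sum; apply: eq_bigr => j _; rewrite mxE.
Qed.

Lemma dist_mx_closed_nbhd_rows (R : numFieldType) v :
  let N := v |: [set y | e v y] in
  \sum_(i in N) \sum_j dist_mx R e i j
  = transmission R e v + (deg e v)%:R * avg_nbr_trans R e v.
Proof.
rewrite /= big_setU1 ?inE ?e_irr //= dist_mx_row_sum deg_mul_avg_nbr_trans.
by congr (_ + _); apply: eq_big => [j|j _]; rewrite ?inE ?dist_mx_row_sum.
Qed.

End GraphDistance.

Definition nbhd_spread_bound (R : rcfType) n (e : rel 'I_n) (v : 'I_n) : R :=
  let Delta : R := (deg e v)%:R in
  let S : R := \sum_(j < n) transmission R e j in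
  let D := transmission R e v in
  let t := avg_nbr_trans R e v in
  let a := (Delta + 1) * (S - 2 * D - 2 * t * Delta) + 2 * n%:R * Delta ^+ 2 in
  let b := D ^+ 2 - 2 * S * Delta ^+ 2 + 2 * D * t * Delta + t ^+ 2 * Delta ^+ 2 in
  Num.sqrt (a ^+ 2 + 4 * b * (1 + Delta) * (n%:R - Delta - 1))
    / ((1 + Delta) * (n%:R - Delta - 1)).

Lemma nbhd_spread_bound_le (R : rcfType) n (e : rel 'I_n) (v : 'I_n) (rho rho_min : R) :
  simple_graph e -> bipartite_graph e -> (deg e v <= n - 2)%N ->
  (forall l, eigenvalue (dist_mx R e) l -> l <= rho) ->
  (forall l, eigenvalue (dist_mx R e) l -> rho_min <= l) -> rho_min <= rho ->
  nbhd_spread_bound R e v <= rho - rho_min.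
Proof.
move=> [e_sym e_irr] e_bip deg_le le_rho ge_rho_min rho_min_le.
rewrite /nbhd_spread_bound; cbv zeta.
set Delta : R := (deg e v)%:R; set S := \sum_(j < n) _.
set D := transmission R e v; set t := avg_nbr_trans R e v.
have [n_lt2|n_ge2] := ltnP n 2.
  have n1 : n%:R = 1 :> R by rewrite (_ : n = 1%N) //; have := ltn_ord v; lia.
  have deg0 : deg e v = 0%N by lia.
  by rewrite /Delta deg0 n1 subr0 subrr !mulr0 invr0 mulr0 subr_ge0.
set N := v |: [set y | e v y].
have card_N : #|N| = (deg e v).+1 by rewrite cardsU1 inE e_irr.
pose c1 : R := #|N|%:R; pose c2 : R := (n - #|N|)%:R.
have c1_gt0 : 0 < c1 by rewrite /c1 ltr0n card_N.
have c2_gt0 : 0 < c2 by rewrite /c2 ltr0n subn_gt0 card_N; lia.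
have symD := dist_mx_sym e_sym R.
have SS_E : \sum_i \sum_j dist_mx R e i j = S.
  by apply: eq_bigr => i _; apply: dist_mx_row_sum.
have le_form x y : x ^+ 2 * (2 * Delta ^+ 2) + 2 * x * y * (D + Delta * t - 2 * Delta ^+ 2)
    + y ^+ 2 * (S - 2 * (D + Delta * t) + 2 * Delta ^+ 2) <= rho * (x ^+ 2 * c1 + y ^+ 2 * c2).
  have := quadmx_le_max_eigenvalue symD (two_valued_row N x y) le_rho.
  rewrite two_valued_row_quad // two_valued_row_norm SS_E.
  by rewrite dist_mx_closed_nbhd_rows // dist_mx_closed_nbhd_sum.
have ge_form x y : rho_min * (x ^+ 2 * c1 + y ^+ 2 * c2) <= x ^+ 2 * (2 * Delta ^+ 2)
    + 2 * x * y * (D + Delta * t - 2 * Delta ^+ 2) + y ^+ 2 * (S - 2 * (D + Delta * t) + 2 * Delta ^+ 2).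
  have := quadmx_ge_min_eigenvalue symD (two_valued_row N x y) ge_rho_min.
  rewrite two_valued_row_quad // two_valued_row_norm SS_E.
  by rewrite dist_mx_closed_nbhd_rows // dist_mx_closed_nbhd_sum.
apply: le_trans (pencil2_spread c1_gt0 c2_gt0 le_form ge_form); rewrite le_eqVlt; apply/predU1l.
have c1E : c1 = Delta + 1 by rewrite /c1 card_N -addn1 natrD.
have c2E : c2 = n%:R - Delta - 1.
  rewrite /c2 natrB -/c1 ?c1E; first by rewrite opprD addrA.
  by rewrite card_N; lia.
by rewrite c1E c2E; congr (Num.sqrt _ / _); ring.
Qed.

Theorem theorem3p2 (R : rcfType) (n : nat) (e : rel 'I_n) (K : {set 'I_n})
  (rho rho_min : R) :
  simple_graph e -> connected_graph e -> bipartite_graph e ->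
  K != set0 ->
  (forall v, v \in K -> deg e v = max_deg e) ->
  (max_deg e <= n - 2)%N ->
  is_largest_eigenvalue (dist_mx R e) rho ->
  is_least_eigenvalue (dist_mx R e) rho_min ->
  let Delta : R := (max_deg e)%:R in
  let S : R := \sum_(j < n) transmission R e j in
  let a (i : 'I_n) : R :=
    (Delta + 1) * (S - 2 * transmission R e i - 2 * avg_nbr_trans R e i * Delta)
    + 2 * n%:R * Delta ^+ 2 in
  let b (i : 'I_n) : R :=
    transmission R e i ^+ 2 - 2 * S * Delta ^+ 2
    + 2 * transmission R e i * avg_nbr_trans R e i * Delta
    + avg_nbr_trans R e i ^+ 2 * Delta ^+ 2 in
  \big[Num.max/0]_(i in K)
     (Num.sqrt (a i ^+ 2 + 4 * b i * (1 + Delta) * (n%:R - Delta - 1))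
       / ((1 + Delta) * (n%:R - Delta - 1)))
  <= rho - rho_min.
Proof.
move=> simple_e _ bip_e _ deg_K deg_le [rho_eig le_rho] [_ ge_rho_min].
have rho_min_le : rho_min <= rho by apply: ge_rho_min.
cbv zeta; elim/big_ind: _ => [|x y le_x le_y|v v_K]; first by rewrite subr_ge0.
  by rewrite ge_max le_x le_y.
rewrite -(deg_K v v_K) in deg_le *.
exact: nbhd_spread_bound_le.
Qed.
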